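(* Let $B$ be a finite skew left brace and let $S$ be a maximal subbrace of $B$. Then either $\zeta(B)\subseteq S$ or $\partial(B)\subseteq S$. In particular, $\zeta(B)\cap\partial(B)\subseteq\Phi(B)$.
   Context: A skew left brace (brace) is a set $B$ with two group structures $(B,+)$ and $(B,\cdot)$ with $a(b+c)=ab-a+ac$; $\lambda_a(b)=-a+ab$. A subbrace is a subset that is a subgroup of both groups; a maximal subbrace is a proper subbrace not contained in any other proper subbrace. An ideal is a subset that is a normal subgroup of both groups and $\lambda_b$-invariant for all $b$. The centre is $\zeta(B)=\{a\in B: a+b=b+a=ab=ba\ \forall b\in B\}$. The derived ideal $\partial(B)=[B,B]$ is the smallest ideal of $B$ containing $[B,B]_+$, $[B,B]_\cdot$ and all $ab-(a+b)$. The Frattini subbrace $\Phi(B)$ is the intersection of all maximal subbraces of $B$ (or $B$ if none exist). *)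

From mathcomp Require Import all_boot.
Set Implicit Arguments. Unset Strict Implicit. Unset Printing Implicit Defensive.

Record skew_brace (T : finType) := SkewBrace {
  badd : T -> T -> T; bopp : T -> T; bzero : T;
  bmul : T -> T -> T; binv : T -> T; bone : T;
  baddA : forall a b c, badd a (badd b c) = badd (badd a b) c;
  badd0 : forall a, badd bzero a = a /\ badd a bzero = a;
  baddN : forall a, badd (bopp a) a = bzero /\ badd a (bopp a) = bzero;
  bmulA : forall a b c, bmul a (bmul b c) = bmul (bmul a b) c;
  bmul1 : forall a, bmul bone a = a /\ bmul a bone = a;
  bmulV : forall a, bmul (binv a) a = bone /\ bmul a (binv a) = bone;
  bbrace : forall a b c,
    bmul a (badd b c) = badd (badd (bmul a b) (bopp a)) (bmul a c)
}.

Section SkewBraceDefs.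
Variables (T : finType) (B : skew_brace T).
Local Notation "a + b" := (badd B a b).
Local Notation "- a" := (bopp B a).
Local Notation "a * b" := (bmul B a b).

Definition blambda (a b : T) : T := - a + a * b.

Definition is_subbrace (S : {set T}) : bool :=
  [&& bzero B \in S, bone B \in S,
      [forall a in S, forall b in S, (a + b \in S) && (a * b \in S)] &
      [forall a in S, (- a \in S) && (binv B a \in S)]].

Definition is_maximal_subbrace (M : {set T}) : bool :=
  [&& is_subbrace M, M != setT &
      [forall S : {set T}, (is_subbrace S && (S != setT) && (M \subset S)) ==> (S == M)]].

Definition is_ideal (I : {set T}) : bool :=
  [&& is_subbrace I,
      [forall a in I, forall b, (b + a + - b \in I) && (b * a * binv B b \in I)] &
      [forall a in I, forall b, blambda b a \in I]].

Definition bcentre : {set T} :=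
  [set a | [forall b, [&& a + b == b + a, b + a == a * b & a * b == b * a]]].

Definition derived_gens : {set T} :=
  [set x | [exists a, exists b,
     [|| x == a + b + - a + - b,
         x == a * b * binv B a * binv B b |
         x == a * b + - (a + b)]]].

Definition bderived : {set T} :=
  \bigcap_(I : {set T} | is_ideal I && (derived_gens \subset I)) I.

(* intersection of all maximal subbraces (the empty intersection is setT = B) *)
Definition bfrattini : {set T} :=
  \bigcap_(M : {set T} | is_maximal_subbrace M) M.

End SkewBraceDefs.

From mathcomp Require Import all_boot.
Set Implicit Arguments. Unset Strict Implicit. Unset Printing Implicit Defensive.

(* Let S be a maximal subbrace of B with ζ(B) ⊄ S.  Central
   elements z satisfy s + z = s z, so S + ζ(B) = {s + z} is again a subbrace;
   it strictly contains S, hence S + ζ(B) = B.  Every b ∈ B is therefore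
   s + z with s ∈ S and z central.  Conjugations, λ-maps, commutators and the
   elements ab - (a + b) do not see the central parts, so S is an ideal
   containing all generators of ∂(B), whence ∂(B) ⊆ S.  The statement about
   the Frattini subbrace follows: an element of ζ(B) ∩ ∂(B) lies in every
   maximal subbrace. *)

Definition group_laws (U : Type) (op : U -> U -> U) (inv : U -> U) (e : U) :=
  [/\ associative op,
      forall x, op e x = x /\ op x e = x &
      forall x, op (inv x) x = e /\ op x (inv x) = e].

Definition central_for (U : Type) (op : U -> U -> U) (c : U) :=
  forall u, op c u = op u c.

Section GroupFacts.
Variables (U : Type) (op : U -> U -> U) (inv : U -> U) (e : U).
Hypothesis laws : group_laws op inv e.

Let opA : associative op. Proof. by case: laws. Qed.
Let op1 x : op e x = x /\ op x e = x. Proof. by case: laws. Qed.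
Let opV x : op (inv x) x = e /\ op x (inv x) = e. Proof. by case: laws. Qed.

Lemma gmulK u y : op (op u y) (inv y) = u.
Proof. by rewrite -opA (proj2 (opV y)) (proj2 (op1 u)). Qed.

Lemma gmulKV u y : op (op u (inv y)) y = u.
Proof. by rewrite -opA (proj1 (opV y)) (proj2 (op1 u)). Qed.

Lemma gmulKg y u : op (inv y) (op y u) = u.
Proof. by rewrite opA (proj1 (opV y)) (proj1 (op1 u)). Qed.

Lemma gmulI x y y' : op x y = op x y' -> y = y'.
Proof. by move=> E; rewrite -(gmulKg x y) E gmulKg. Qed.

Lemma gmulIr y x x' : op x y = op x' y -> x = x'.
Proof. by move=> E; rewrite -(gmulK x y) E gmulK. Qed.

Lemma ginvM x y : inv (op x y) = op (inv y) (inv x).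
Proof.
apply: (gmulI (x := op x y)).
by rewrite (proj2 (opV _)) !opA gmulK (proj2 (opV x)).
Qed.

Lemma gdivKr P Q w : op (op P w) (inv (op Q w)) = op P (inv Q).
Proof. by rewrite ginvM opA gmulK. Qed.

Section Central.
Variable c : U.
Hypothesis cC : central_for op c.

Lemma gcentralV : central_for op (inv c).
Proof.
move=> u; transitivity (op (op (op (inv c) u) c) (inv c)); first by rewrite gmulK.
by rewrite -(opA (inv c) u c) -cC gmulKg.
Qed.

Lemma gmul_centralC P Q : op (op P c) Q = op (op P Q) c.
Proof. by rewrite -opA cC opA. Qed.

Lemma gmul_central2 x y d : op (op x c) (op y d) = op (op x y) (op c d).
Proof. by rewrite !opA gmul_centralC. Qed.

Lemma gconj_central x a : op (op (op x c) a) (inv (op x c)) = op (op x a) (inv x).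
Proof. by rewrite ginvM -(opA x c a) cC !opA gmulK. Qed.

Lemma gcomm_central d x y : central_for op d ->
  op (op (op (op x c) (op y d)) (inv (op x c))) (inv (op y d)) =
  op (op (op x y) (inv x)) (inv y).
Proof.
move=> dC; rewrite gconj_central opA.
by rewrite -(opA (op x y) d (inv x)) dC opA gdivKr.
Qed.

End Central.
End GroupFacts.

Section Brace.
Variables (T : finType) (B : skew_brace T).
Local Notation "a + b" := (badd B a b).
Local Notation "- a" := (bopp B a).
Local Notation "a * b" := (bmul B a b).

Lemma add_laws : group_laws (badd B) (bopp B) (bzero B).
Proof. by split; [exact: baddA | exact: badd0 | exact: baddN]. Qed.

Lemma mul_laws : group_laws (bmul B) (binv B) (bone B).
Proof. by split; [exact: bmulA | exact: bmul1 | exact: bmulV]. Qed.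

Lemma zero_one : bzero B = bone B.
Proof.
have mul0 a : a * bzero B = a.
  have E := bbrace B a (bzero B) (bzero B).
  rewrite (proj1 (badd0 B _)) in E.
  have : bzero B + a * bzero B = (a * bzero B + - a) + a * bzero B.
    by rewrite (proj1 (badd0 B _)) -E.
  move/(gmulIr add_laws) => E0.
  by rewrite -(gmulKV add_laws (a * bzero B) a) -E0 (proj1 (badd0 B _)).
by rewrite -(mul0 (bone B)) (proj1 (bmul1 B _)).
Qed.

Definition is_central (z : T) :=
  forall b, z + b = b + z /\ b + z = z * b /\ z * b = b * z.

Lemma bcentreP z : reflect (is_central z) (z \in bcentre B).
Proof.
rewrite inE; apply: (iffP forallP) => H b.
  by case/and3P: (H b) => /eqP ? /eqP ? /eqP ?.
by case: (H b) => -> [-> ->]; rewrite !eqxx.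
Qed.

Section CentralElement.
Variable z : T.
Hypothesis zC : is_central z.

Lemma central_add : central_for (badd B) z.
Proof. by move=> u; case: (zC u). Qed.

Lemma central_mul : central_for (bmul B) z.
Proof. by move=> u; case: (zC u) => _ []. Qed.

Lemma central_add_mul u : u + z = z * u.
Proof. by case: (zC u) => _ []. Qed.

Lemma central_addE s : s + z = s * z.
Proof. by rewrite central_add_mul central_mul. Qed.

Lemma central_inv : binv B z = - z.
Proof.
apply: (gmulI mul_laws (x := z)).
by rewrite (proj2 (bmulV B z)) -central_add_mul (proj1 (baddN B z)) zero_one.
Qed.

End CentralElement.

Lemma central0 : is_central (bzero B).
Proof.
move=> b; rewrite (proj1 (badd0 B b)) (proj2 (badd0 B b)) zero_one.
by rewrite (proj1 (bmul1 B b)) (proj2 (bmul1 B b)).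
Qed.

Lemma centralD z z' : is_central z -> is_central z' -> is_central (z + z').
Proof.
move=> zC z'C b; split; [|split].
- by rewrite -baddA (central_add z'C b) baddA (central_add zC b) -baddA.
- rewrite [in RHS](central_add_mul z'C z) -bmulA -(central_add_mul zC b).
  by rewrite -(central_add_mul z'C (b + z)) -baddA.
- rewrite !(central_add_mul z'C z) -bmulA (central_mul zC b) bmulA.
  by rewrite (central_mul z'C b) -bmulA.
Qed.

Lemma centralN z : is_central z -> is_central (- z).
Proof.
move=> zC; rewrite -central_inv //.
have zVC := gcentralV mul_laws (central_mul zC).
move=> b; split; [|split]; last exact: zVC.
- by rewrite central_inv //; exact: (gcentralV add_laws (central_add zC)).
- apply: (gmulI mul_laws (x := z)); rewrite (bmulA B z (binv B z) b).
  rewrite (proj2 (bmulV B z)) (proj1 (bmul1 B b)) -central_add_mul //.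
  by rewrite central_inv // (gmulKV add_laws).
Qed.

(* Introduction rule for subbraces, with the closure conditions stated in
   Prop; the condition 1 ∈ S is redundant since 1 = 0. *)
Lemma is_subbraceI (S : {set T}) : bzero B \in S ->
  (forall a b, a \in S -> b \in S -> a + b \in S /\ a * b \in S) ->
  (forall a, a \in S -> - a \in S /\ binv B a \in S) ->
  is_subbrace B S.
Proof.
move=> S0 closedDM closedNV; apply/and4P; split; rewrite -?zero_one //.
  apply/forallP => a; apply/implyP => aS; apply/forallP => b; apply/implyP => bS.
  by case: (closedDM a b aS bS) => -> ->.
by apply/forallP => a; apply/implyP => aS; case: (closedNV a aS) => -> ->.
Qed.

Section Subbrace.
Variable S : {set T}.
Hypothesis S_sub : is_subbrace B S.

Lemma subbrace0 : bzero B \in S.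
Proof. by case/and4P: S_sub. Qed.

Lemma subbraceDM a b : a \in S -> b \in S -> (a + b \in S) /\ (a * b \in S).
Proof.
case/and4P: S_sub => _ _ /forallP /(_ a) + _ aS bS.
by rewrite aS => /forallP /(_ b); rewrite bS => /andP.
Qed.

Lemma subbraceNV a : a \in S -> (- a \in S) /\ (binv B a \in S).
Proof.
by case/and4P: S_sub => _ _ _ /forallP /(_ a) + aS; rewrite aS => /andP.
Qed.

Lemma subbraceD a b : a \in S -> b \in S -> a + b \in S.
Proof. by move=> aS bS; case: (subbraceDM aS bS). Qed.

Lemma subbraceM a b : a \in S -> b \in S -> a * b \in S.
Proof. by move=> aS bS; case: (subbraceDM aS bS). Qed.

Lemma subbraceN a : a \in S -> - a \in S.
Proof. by case/subbraceNV. Qed.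

Lemma subbraceV a : a \in S -> binv B a \in S.
Proof. by case/subbraceNV. Qed.

Definition central_sum : {set T} := [set s + z | s in S, z in bcentre B].

Lemma central_sumP b :
  reflect (exists2 s, s \in S & exists2 z, is_central z & b = s + z)
          (b \in central_sum).
Proof.
apply: (iffP imset2P) => [[s z sS /bcentreP zC ->]|[s sS [z /bcentreP zZ ->]]].
  by exists s => //; exists z.
by exists s z.
Qed.

Lemma mem_central_sum s z : s \in S -> is_central z -> s + z \in central_sum.
Proof. by move=> sS zC; apply/central_sumP; exists s => //; exists z. Qed.

Lemma sub_central_sum : S \subset central_sum.
Proof.
apply/subsetP => s sS; rewrite -(proj2 (badd0 B s)).
exact: mem_central_sum sS central0.
Qed.

(* S + ζ(B) is again a subbrace, since s + z = s z for central z. *)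
Lemma central_sum_subbrace : is_subbrace B central_sum.
Proof.
apply: is_subbraceI.
- by rewrite -(proj2 (badd0 B (bzero B))); exact: mem_central_sum subbrace0 central0.
- move=> _ _ /central_sumP [s sS [z zC ->]] /central_sumP [s' s'S [z' z'C ->]].
  split.
    rewrite (gmul_central2 add_laws (central_add zC)).
    exact: mem_central_sum (subbraceD sS s'S) (centralD zC z'C).
  rewrite (central_addE zC) (central_addE z'C).
  rewrite (gmul_central2 mul_laws (central_mul zC)) -(central_add_mul zC z').
  rewrite -(central_addE (centralD z'C zC)).
  exact: mem_central_sum (subbraceM sS s'S) (centralD z'C zC).
- move=> _ /central_sumP [s sS [z zC ->]]; split.
    rewrite (ginvM add_laws) (gcentralV add_laws (central_add zC)).
    exact: mem_central_sum (subbraceN sS) (centralN zC).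
  rewrite (central_addE zC) (ginvM mul_laws) (gcentralV mul_laws (central_mul zC)).
  rewrite (central_inv zC) -(central_addE (centralN zC)).
  exact: mem_central_sum (subbraceV sS) (centralN zC).
Qed.

End Subbrace.

Lemma maximal_central_sum S :
  is_maximal_subbrace B S -> ~~ (bcentre B \subset S) ->
  forall b, exists2 s, s \in S & exists2 z, is_central z & b = s + z.
Proof.
case/and3P => S_sub _ /forallP S_max /subsetPn [z0 /bcentreP z0C z0S] b.
apply/(central_sumP S); suff -> : central_sum S = setT by rewrite inE.
apply/eqP; apply: contraT => SZ_proper.
have := S_max (central_sum S).
rewrite central_sum_subbrace // SZ_proper sub_central_sum //= => /eqP SZ_S.
by move: z0S; rewrite -SZ_S -(proj1 (badd0 B z0)) mem_central_sum // subbrace0.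
Qed.

Lemma is_idealI (I : {set T}) : is_subbrace B I ->
  (forall a b, a \in I -> b + a + - b \in I /\ b * a * binv B b \in I) ->
  (forall a b, a \in I -> blambda B b a \in I) ->
  is_ideal B I.
Proof.
move=> I_sub normal lambda_inv; apply/and3P; split => //.
  apply/forallP => a; apply/implyP => aI; apply/forallP => b.
  by case: (normal a b aI) => -> ->.
apply/forallP => a; apply/implyP => aI; apply/forallP => b; exact: lambda_inv.
Qed.

Section CentralCover.
Variable S : {set T}.
Hypothesis S_sub : is_subbrace B S.
Hypothesis cover :
  forall b, exists2 s, s \in S & exists2 z, is_central z & b = s + z.

Let memD := subbraceD S_sub.
Let memM := subbraceM S_sub.
Let memN := subbraceN S_sub.
Let memV := subbraceV S_sub.

(* Conjugations and λ-maps by s + z act as those by s, so S is an ideal. *)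
Lemma central_cover_ideal : is_ideal B S.
Proof.
apply: is_idealI => // a b aS; have [s sS [z zC ->]] := cover b.
  split.
    rewrite (gconj_central add_laws (central_add zC)).
    exact: memD (memD sS aS) (memN sS).
  rewrite (central_addE zC) (gconj_central mul_laws (central_mul zC)).
  exact: memM (memM sS aS) (memV sS).
have lambda_sz : blambda B (s + z) a = - s + s * a.
  rewrite /blambda (ginvM add_laws) (gcentralV add_laws (central_add zC)).
  rewrite (central_addE zC) -(central_mul zC s) -bmulA -(central_add_mul zC).
  by rewrite -(central_add zC (s * a)) -baddA (gmulKg add_laws).
by rewrite lambda_sz; exact: memD (memN sS) (memM sS aS).
Qed.

(* Each generator of ∂(B) computed at s + z, s' + z' equals the same
   generator computed at s, s', hence lies in S. *)
Lemma central_cover_derived_gens : derived_gens B \subset S.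
Proof.
apply/subsetP => x; rewrite inE => /existsP [a /existsP [b]].
have [s sS [z zC ->]] := cover a; have [s' s'S [z' z'C ->]] := cover b.
case/or3P => /eqP ->.
- rewrite (gcomm_central add_laws (central_add zC) _ _ (central_add z'C)).
  exact: memD (memD (memD sS s'S) (memN sS)) (memN s'S).
- rewrite (central_addE zC) (central_addE z'C).
  rewrite (gcomm_central mul_laws (central_mul zC) _ _ (central_mul z'C)).
  exact: memM (memM (memM sS s'S) (memV sS)) (memV s'S).
- rewrite (gmul_central2 add_laws (central_add zC)) (central_addE zC).
  rewrite (central_addE z'C) (gmul_central2 mul_laws (central_mul zC)).
  rewrite -(central_add_mul zC z') -(central_addE (centralD z'C zC)).
  rewrite (central_add zC z') (gdivKr add_laws).
  exact: memD (memM sS s'S) (memN (memD sS s'S)).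
Qed.

End CentralCover.

Lemma bderived_min I : is_ideal B I -> derived_gens B \subset I -> bderived B \subset I.
Proof. by move=> I_ideal gensI; apply: bigcap_inf; rewrite I_ideal. Qed.

Theorem maximal_subbrace_centre_or_derived S : is_maximal_subbrace B S ->
  (bcentre B \subset S) \/ (bderived B \subset S).
Proof.
move=> S_max; have [|ZnS] := boolP (bcentre B \subset S); first by left.
have S_sub : is_subbrace B S by case/and3P: S_max.
have cover := maximal_central_sum S_max ZnS.
right; apply: bderived_min.
  exact: central_cover_ideal.
exact: central_cover_derived_gens.
Qed.

End Brace.

Theorem corollary4p9 (T : finType) (B : skew_brace T) :
  (forall S : {set T}, is_maximal_subbrace B S ->
     (bcentre B \subset S) \/ (bderived B \subset S)) /\
  (bcentre B :&: bderived B \subset bfrattini B).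
Proof.
split; first exact: maximal_subbrace_centre_or_derived.
apply/subsetP => x /setIP [xZ xD]; apply/bigcapP => M M_max.
by case: (maximal_subbrace_centre_or_derived M_max) => /subsetP; apply.
Qed.
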